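(* Let $\alpha_k\in(0,1]$, $k\ge1$, be given, and let $x^l_k,x_k,x^u_k$, the level $l$ and the function $d_\omega$ be those of procedure $\mathcal{G}_{APL}(p,\mathrm{lb},\beta,\theta)$. Then for every $k\ge1$ for which $x_k$ and $x^u_k$ are computed, $$f(x^u_k)-l\le(1-\alpha_1)\gamma_k(1)[f(x^u_0)-l]+\frac{M}{1+\rho}\Big[\frac{2d_\omega(x_k)}{\sigma_\omega}\Big]^{\frac{1+\rho}{2}}\gamma_k(1)\|\Gamma_k(1,\rho)\|_{\frac{2}{1-\rho}}.$$ In particular, if $\alpha_1=1$ and for some $c>0$, $\gamma_k(1)\|\Gamma_k(1,\rho)\|_{\frac{2}{1-\rho}}\le ck^{-\frac{1+3\rho}{2}}$ for all $k\ge1$, then the number of iterations performed by the procedure is at most $$K_{APL}(\Delta_0):=\left\lceil\left(\frac{cM\Omega_{\omega,X}^{\frac{1+\rho}{2}}}{\beta\theta(1+\rho)\Delta_0}\right)^{\frac{2}{1+3\rho}}\right\rceil,\qquad \Delta_0=\overline f_0-\underline f_0.$$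
   Context: Problem: $f^*=\min_{x\in X}f(x)$, $X\subseteq\mathbb{R}^n$ nonempty convex compact, $\mathbb{R}^n$ with arbitrary norm $\|\cdot\|$; $f:X\to\mathbb{R}$ convex with oracle returning $f(x)$, $f'(x)\in\partial f(x)$ such that for some $M>0$, $\rho\in[0,1]$: $f(y)-f(x)-\langle f'(x),y-x\rangle\le\frac{M}{1+\rho}\|y-x\|^{1+\rho}$ for all $x,y\in X$. $h(z,x):=f(z)+\langle f'(z),x-z\rangle$; $\mathcal{L}_f(l):=\{x\in X:f(x)\le l\}$; a localizer of $\mathcal{L}_f(l)$ is a convex compact $X'$ with $\mathcal{L}_f(l)\subseteq X'\subseteq X$. $\omega:X\to\mathbb{R}$ differentiable, strongly convex with modulus $\sigma_\omega$ w.r.t. $\|\cdot\|$; $\mathcal{D}^2_{\omega,X}:=\max_{x,z\in X}\{\omega(x)-\omega(z)-\langle\nabla\omega(z),x-z\rangle\}$, $\Omega_{\omega,X}:=2\mathcal{D}^2_{\omega,X}/\sigma_\omega$. $\gamma_1(1)=1$, $\gamma_k(1)=(1-\alpha_k)\gamma_{k-1}(1)$; $\Gamma_k(1,\rho)=(\gamma_i(1)^{-1}\alpha_i^{1+\rho})_{i=1}^k$; $\|\cdot\|_p$ the $\ell_p$ norm ($\frac{2}{1-\rho}=\infty$ if $\rho=1$). Procedure $\mathcal{G}_{APL}(p,\mathrm{lb},\beta,\theta)$ ($p\in X$, $\beta,\theta\in(0,1)$): Step 0: $x^u_0=p$, $\overline f_0=f(p)$, $\underline f_0=\mathrm{lb}$,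 $l=\beta\underline f_0+(1-\beta)\overline f_0$; choose $x_0\in X$ and an initial localizer $X'_0$ (e.g. $x_0=p$, $X'_0=X$); $d_\omega(x)=\omega(x)-[\omega(x_0)+\langle\nabla\omega(x_0),x-x_0\rangle]$; $k=1$. Step 1: $x^l_k=(1-\alpha_k)x^u_{k-1}+\alpha_kx_{k-1}$, $\underline h_k=\min_{x\in X'_{k-1}}h(x^l_k,x)$, $\underline f_k=\max\{\underline f_{k-1},\min\{l,\underline h_k\}\}$; if $\underline f_k\ge l-\theta(l-\underline f_0)$ terminate with $p^+=x^u_{k-1}$, $\mathrm{lb}^+=\underline f_k$. Step 2: $x_k=\operatorname{argmin}_{x\in X'_{k-1}}\{d_\omega(x):h(x^l_k,x)\le l\}$. Step 3: $\overline f_k=\min\{\overline f_{k-1},f(\alpha_kx_k+(1-\alpha_k)x^u_{k-1})\}$, $x^u_k$ with $f(x^u_k)=\overline f_k$; if $\overline f_k\le l+\theta(\overline f_0-l)$ terminate with $p^+=x^u_k$, $\mathrm{lb}^+=\underline f_k$. Step 4: choose closed convex $X'_k$ with $\{x\in X'_{k-1}:h(x^l_k,x)\le l\}\subseteq X'_k\subseteq\{x\in X:\langle\nabla d_\omega(x_k),x-x_k\rangle\ge0\}$. Step 5: $k\leftarrow k+1$, go to Step 1. *)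

From mathcomp Require Import all_boot all_order all_algebra.
From mathcomp Require Import all_classical all_reals all_analysis.
Set Implicit Arguments. Unset Strict Implicit. Unset Printing Implicit Defensive.
Import Order.TTheory GRing.Theory Num.Theory.
Import numFieldNormedType.Exports.
Local Open Scope classical_set_scope.
Local Open Scope ring_scope.

Section APL.
Variables (R : realType) (n : nat).
Notation vec := 'rV[R]_n.

Definition dotv (g x : vec) : R := \sum_(i < n) g 0 i * x 0 i.

Definition is_norm (nrm : vec -> R) : Prop :=
  [/\ forall x, 0 <= nrm x,
      forall x, nrm x = 0 -> x = 0,
      forall (a : R) x, nrm (a *: x) = `|a| * nrm x
    & forall x y, nrm (x + y) <= nrm x + nrm y].

Definition is_convex_set (A : set vec) : Prop :=
  forall x y (t : R), A x -> A y -> 0 <= t <= 1 -> A (t *: x + (1 - t) *: y).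

Definition convex_fun_on (X : set vec) (f : vec -> R) : Prop :=
  forall x y (t : R), X x -> X y -> 0 <= t <= 1 ->
    f (t *: x + (1 - t) *: y) <= t * f x + (1 - t) * f y.

Definition hlin (f : vec -> R) (fp : vec -> vec) (z x : vec) : R :=
  f z + dotv (fp z) (x - z).

Definition level_set (X : set vec) (f : vec -> R) (l : R) : set vec :=
  [set x | X x /\ f x <= l].

Definition localizer (X : set vec) (f : vec -> R) (l : R) (X' : set vec) : Prop :=
  [/\ is_convex_set X', compact X', level_set X f l `<=` X' & X' `<=` X].

Definition d_omega (omega : vec -> R) (gw : vec -> vec) (x0 x : vec) : R :=
  omega x - (omega x0 + dotv (gw x0) (x - x0)).

(* gamma_1(1) = 1, gamma_k(1) = (1 - alpha_k) gamma_{k-1}(1) *)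
Definition gamma1 (alpha : nat -> R) (k : nat) : R :=
  \prod_(2 <= i < k.+1) (1 - alpha i).

(* Gamma_k(1,rho) = (gamma_i(1)^{-1} alpha_i^{1+rho})_{i=1..k} *)
Definition Gamma1 (alpha : nat -> R) (rho : R) (i : nat) : R :=
  (gamma1 alpha i)^-1 * alpha i `^ (1 + rho).

(* l_q norm of (a_i)_{i=1..k} with q = 2/(1-rho), q = +oo when rho = 1 *)
Definition lq_norm (rho : R) (a : nat -> R) (k : nat) : R :=
  if rho == 1 then \big[Num.max/0]_(1 <= i < k.+1) `|a i|
  else (\sum_(1 <= i < k.+1) `|a i| `^ (2 / (1 - rho))) `^ ((1 - rho) / 2).

(* min_{x in A} h(z, x) as an extended real (= +oo when A is empty) *)
Definition hmin (f : vec -> R) (fp : vec -> vec) (z : vec) (A : set vec) : \bar R :=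
  ereal_inf [set (hlin f fp z x)%:E | x in A].

(* One admissible run of G_APL(p, lb, beta, theta) in which
   - iterations 1, ..., k-1 were completed (Steps 1-4) without termination, and
   - at iteration k, Step 1 did not terminate and Steps 2 and 3 were executed
     (so x_k and x^u_k were computed).
   xl, x, xu : the sequences x^l_k, x_k, x^u_k; fup, flow : \overline f_k,
   \underline f_k; Xp : the localizers X'_k; l the level. *)
Definition APL_run (X : set vec) (f : vec -> R) (fp : vec -> vec)
    (omega : vec -> R) (gw : vec -> vec) (alpha : nat -> R)
    (p : vec) (lb beta theta : R)
    (l : R) (xl x xu : nat -> vec) (fup flow : nat -> R) (Xp : nat -> set vec)
    (k : nat) : Prop :=
  let dw := d_omega omega gw (x 0%N) in
  (* Step 0 *)
  [/\ [/\ xu 0%N = p, fup 0%N = f p, flow 0%N = lb,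
          l = beta * flow 0%N + (1 - beta) * fup 0%N &
          X (x 0%N) /\ localizer X f l (Xp 0%N)],
  (* Steps 1, 2, 3 at every iteration j = 1..k, with no termination at Step 1 *)
      (forall j, (1 <= j <= k)%N ->
        [/\ xl j = (1 - alpha j) *: xu j.-1 + alpha j *: x j.-1,
            flow j = Num.max (flow j.-1)
                       (fine (mine l%:E (hmin f fp (xl j) (Xp j.-1)))),
            flow j < l - theta * (l - flow 0%N) /\
            (* Step 2 *)
            (Xp j.-1 (x j) /\ hlin f fp (xl j) (x j) <= l) /\
            (forall y, Xp j.-1 y -> hlin f fp (xl j) y <= l -> dw (x j) <= dw y),
            (* Step 3 *)
            fup j = Num.min (fup j.-1) (f (alpha j *: x j + (1 - alpha j) *: xu j.-1))
          & X (xu j) /\ f (xu j) = fup j])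
  (* no termination at Step 3 and Step 4 executed, at iterations j = 1..k-1 *)
    & (forall j, (1 <= j < k)%N ->
        [/\ l + theta * (fup 0%N - l) < fup j,
            closed (Xp j), is_convex_set (Xp j),
            [set y | Xp j.-1 y /\ hlin f fp (xl j) y <= l] `<=` Xp j
          & Xp j `<=` [set y | X y /\ 0 <= dotv (gw (x j) - gw (x 0%N)) (y - x j)]])].

End APL.

Definition Omega_wX (R : realType) (D2 sigma : R) : R := 2 * D2 / sigma.

Definition K_APL (R : realType) (c M Omega beta theta rho Delta0 : R) : int :=
  Num.ceil ((c * M * Omega `^ ((1 + rho) / 2) / (beta * theta * (1 + rho) * Delta0))
              `^ (2 / (1 + 3 * rho))).

From mathcomp Require Import all_boot all_order all_algebra.
From mathcomp Require Import all_classical all_reals all_analysis.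
From mathcomp Require Import ring lra.
Set Implicit Arguments. Unset Strict Implicit. Unset Printing Implicit Defensive.
Import Order.TTheory GRing.Theory Num.Theory.
Import numFieldNormedType.Exports.
Local Open Scope classical_set_scope.
Local Open Scope ring_scope.

(* Write N_j = ||x_j - x_{j-1}||.  Smoothness of f at x^l_j, together with
   h(x^l_j, x_j) <= l, gives the one-step recurrence
     f(x^u_j) - l <= (1 - alpha_j) (f(x^u_{j-1}) - l) + M/(1+rho) alpha_j^(1+rho) N_j^(1+rho),
   which unrolls to gamma_k(1) [(1 - alpha_1)(f(x^u_0) - l)
   + M/(1+rho) sum_j Gamma_j N_j^(1+rho)].  The next iterate x_{j+1} lies in the
   localizer X'_j, which Step 4 keeps inside the half-space
   {<grad d_omega(x_j), . - x_j> >= 0}, so strong convexity gives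
   d_omega(x_j) + sigma/2 N_{j+1}^2 <= d_omega(x_{j+1}); hence
   sum_j N_j^2 <= 2 d_omega(x_k)/sigma, and Hoelder's inequality with exponents
   2/(1-rho) and 2/(1+rho) bounds the sum.  For the iteration bound, before
   termination f(x^u_k) - l exceeds theta (f(x^u_0) - l) = theta beta Delta_0. *)

Section Hoelder.
Variable R : realType.
Implicit Types (a b G N : nat -> R) (p q rho S x : R).

Lemma powRV x p : 0 <= x -> x^-1 `^ p = (x `^ p)^-1.
Proof.
by move=> x0; rewrite -powR_inv1 // -powRrM mulrC powRrM powR_inv1 ?powR_ge0.
Qed.

Lemma sum_powR_eq0_mul m k a b p :
  \sum_(m <= i < k) a i `^ p = 0 -> \sum_(m <= i < k) a i * b i = 0.
Proof.
move/eqP; rewrite psumr_eq0 => [/allP a0|i _]; last exact: powR_ge0.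
rewrite big_seq big1 // => i /a0 /eqP /powR_eq0_eq0 ->.
by rewrite mul0r.
Qed.

Lemma hoelder_sum m k a b p q :
  (forall i, 0 <= a i) -> (forall i, 0 <= b i) ->
  0 < p -> 0 < q -> p^-1 + q^-1 = 1 ->
  \sum_(m <= i < k) a i * b i <=
  (\sum_(m <= i < k) a i `^ p) `^ p^-1 * (\sum_(m <= i < k) b i `^ q) `^ q^-1.
Proof.
move=> a0 b0 p0 q0 pq.
set A := \sum_(m <= i < k) a i `^ p; set B := \sum_(m <= i < k) b i `^ q.
have rhs0 : 0 <= A `^ p^-1 * B `^ q^-1 by rewrite mulr_ge0 ?powR_ge0.
have [A0|Ane] := eqVneq A 0; first by rewrite (sum_powR_eq0_mul b A0).
have [B0|Bne] := eqVneq B 0.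
  rewrite (eq_bigr (fun i => b i * a i)) => [|i _]; last exact: mulrC.
  by rewrite (sum_powR_eq0_mul a B0).
have Ap : 0 < A by rewrite lt0r Ane sumr_ge0 // => i _; exact: powR_ge0.
have Bp : 0 < B by rewrite lt0r Bne sumr_ge0 // => i _; exact: powR_ge0.
set A' := A `^ p^-1; set B' := B `^ q^-1.
have A'p : 0 < A' by exact: powR_gt0.
have B'p : 0 < B' by exact: powR_gt0.
have A'e : A' `^ p = A by rewrite -powRrM mulVf ?gt_eqF // powRr1 ?ltW.
have B'e : B' `^ q = B by rewrite -powRrM mulVf ?gt_eqF // powRr1 ?ltW.
(* Young's inequality applied to the normalized terms a_i / A' and b_i / B' *)
have young i : a i * b i <= A' * B' * (a i `^ p / A / p + b i `^ q / B / q).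
  clearbody A' B' A B.
  have -> : a i * b i = A' * B' * (a i / A' * (b i / B')) by field; rewrite !gt_eqF.
  rewrite ler_pM2l ?mulr_gt0 //.
  have := conjugate_powR (divr_ge0 (a0 i) (ltW A'p)) (divr_ge0 (b0 i) (ltW B'p)) p0 q0 pq.
  rewrite (powRM _ (a0 i)) ?invr_ge0 ?(ltW A'p) // (powRM _ (b0 i)) ?invr_ge0 ?(ltW B'p) //.
  by rewrite !powRV ?(ltW A'p) ?(ltW B'p) // A'e B'e.
apply: le_trans (ler_sum _ (fun i _ => young i)) _.
rewrite -mulr_sumr big_split /= -!mulr_suml -/A -/B !mulfV ?gt_eqF //.
by rewrite !mul1r pq mulr1.
Qed.

Lemma lq_norm_hoelder rho S G N k :
  0 <= rho <= 1 -> (forall i, 0 <= G i) -> (forall i, 0 <= N i) ->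
  \sum_(1 <= i < k.+1) N i ^+ 2 <= S ->
  \sum_(1 <= i < k.+1) G i * N i `^ (1 + rho)
    <= lq_norm rho G k * S `^ ((1 + rho) / 2).
Proof.
move=> /andP[rho0 rho1] G0 N0 NS.
have S0 : 0 <= S by apply: le_trans NS; apply: sumr_ge0 => i _; exact: sqr_ge0.
rewrite /lq_norm; have [->|rho_neq1] := eqVneq rho 1.
  have -> : (1 + 1) / 2 = 1 :> R by rewrite divff.
  set Gmax := \big[Num.max/0]_(1 <= i < k.+1) `|G i|.
  have Gmax0 : 0 <= Gmax.
    by apply: (big_ind (fun y => 0 <= y)) => // y z y0 _; rewrite le_max y0.
  apply: le_trans (_ : _ <= \sum_(1 <= i < k.+1) Gmax * N i ^+ 2) _.
    rewrite !big_nat; apply: ler_sum => i i_in.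
    rewrite (powR_mulrn 2) // ler_wpM2r ?sqr_ge0 //.
    apply: le_trans (ler_norm _) _.
    by rewrite /Gmax (le_bigmax_seq 0 i xpredT (fun i => `|G i|)) // mem_index_iota.
  by rewrite -mulr_sumr powRr1 // ler_wpM2l.
have rho_lt1 : rho < 1 by rewrite lt_neqAle rho_neq1.
have p0 : 0 < 2 / (1 - rho) by rewrite divr_gt0 // subr_gt0.
have q0 : 0 < 2 / (1 + rho) by rewrite divr_gt0 // ltr_wpDr.
have Np i : (N i `^ (1 + rho)) `^ (2 / (1 + rho)) = N i ^+ 2.
  by rewrite -powRrM mulrC mulfVK ?gt_eqF ?ltr_wpDr // (powR_mulrn 2).
have pq : (2 / (1 - rho))^-1 + (2 / (1 + rho))^-1 = 1.
  by rewrite !invf_div; field.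
have := hoelder_sum 1 k.+1 (fun i => normr_ge0 (G i)) (fun i => powR_ge0 (N i) (1 + rho))
   p0 q0 pq.
rewrite !invf_div (eq_bigr _ (fun i _ => Np i)).
rewrite (eq_bigr (fun i => G i * N i `^ (1 + rho))) => [|i _]; last by rewrite ger0_norm.
move/le_trans; apply; rewrite ler_wpM2l ?powR_ge0 // ge0_ler_powR ?nnegrE ?divr_ge0 ?addr_ge0 //.
by apply: sumr_ge0 => i _; exact: sqr_ge0.
Qed.

End Hoelder.

Section Recurrence.
Variable R : realType.
Implicit Types (alpha e c d s : nat -> R) (m rho : R).

Lemma gamma1_1 alpha : gamma1 alpha 1 = 1.
Proof. by rewrite /gamma1 big_geq. Qed.

Lemma gamma1S alpha j :
  (1 <= j)%N -> gamma1 alpha j.+1 = gamma1 alpha j * (1 - alpha j.+1).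
Proof. by move=> j1; rewrite /gamma1 big_nat_recr. Qed.

Lemma gamma1_ge0 alpha j :
  (forall i, (1 <= i <= j)%N -> alpha i <= 1) -> 0 <= gamma1 alpha j.
Proof.
move=> a1; rewrite /gamma1 big_nat; apply: prodr_ge0 => i /andP[i2 ij].
by rewrite subr_ge0 a1 // ltnW.
Qed.

Lemma mul_gamma1_Gamma1 alpha rho i :
  gamma1 alpha i != 0 -> gamma1 alpha i * Gamma1 alpha rho i = alpha i `^ (1 + rho).
Proof. by move=> g0; rewrite /Gamma1 mulrA mulfV // mul1r. Qed.

Lemma gamma1_unroll alpha e c m rho k :
  (forall j, (1 <= j <= k)%N -> alpha j <= 1) ->
  (forall j, (1 <= j <= k)%N -> gamma1 alpha j != 0) ->
  (forall j, (1 <= j <= k)%N ->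
     e j <= (1 - alpha j) * e j.-1 + m * (alpha j `^ (1 + rho) * c j)) ->
  (1 <= k)%N ->
  e k <= gamma1 alpha k *
    ((1 - alpha 1%N) * e 0%N + m * \sum_(1 <= i < k.+1) Gamma1 alpha rho i * c i).
Proof.
move=> a1 g0 rec k1; suff: forall j, (1 <= j <= k)%N -> e j <= gamma1 alpha j *
    ((1 - alpha 1%N) * e 0%N + m * \sum_(1 <= i < j.+1) Gamma1 alpha rho i * c i).
  by apply; rewrite k1 leqnn.
elim=> [//|[_ jk|j IH /andP[_ jk]]].
  by rewrite big_nat1 /Gamma1 gamma1_1 invr1 !mul1r rec.
set T := (1 - alpha 1%N) * e 0%N.
set S := \sum_(1 <= i < j.+2) Gamma1 alpha rho i * c i.
have jk' : (1 <= j.+2 <= k)%N by rewrite jk.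
rewrite big_nat_recr //= -/S.
have -> : gamma1 alpha j.+2 * (T + m * (S + Gamma1 alpha rho j.+2 * c j.+2)) =
    (1 - alpha j.+2) * (gamma1 alpha j.+1 * (T + m * S))
    + m * (gamma1 alpha j.+2 * Gamma1 alpha rho j.+2 * c j.+2).
  by rewrite gamma1S //; ring.
rewrite mul_gamma1_Gamma1 ?g0 //; apply: le_trans (rec _ jk') _.
rewrite lerD2r ler_wpM2l ?subr_ge0 ?a1 //.
exact: IH (ltnW jk).
Qed.

Lemma telescope_le d s k :
  (forall j, (j < k)%N -> d j + s j.+1 <= d j.+1) ->
  d 0%N + \sum_(1 <= i < k.+1) s i <= d k.
Proof.
elim: k => [_|k IH step]; first by rewrite big_geq ?addr0.
rewrite big_nat_recr //= addrA; apply: le_trans (step k (ltnSn k)).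
by rewrite lerD2r IH // => j jk; rewrite step // ltnS ltnW.
Qed.

End Recurrence.

Section Linearization.
Variables (R : realType) (n : nat).
Notation vec := 'rV[R]_n.
Implicit Types (g h u v w x y z : vec) (a b : R).

Lemma dotvDr g x y : dotv g (x + y) = dotv g x + dotv g y.
Proof. by rewrite /dotv -big_split; apply: eq_bigr => i _; rewrite !mxE mulrDr. Qed.

Lemma dotvZr a g x : dotv g (a *: x) = a * dotv g x.
Proof. by rewrite /dotv mulr_sumr; apply: eq_bigr => i _; rewrite !mxE mulrCA. Qed.

Lemma dotvBr g x y : dotv g (x - y) = dotv g x - dotv g y.
Proof. by rewrite dotvDr -scaleN1r dotvZr mulN1r. Qed.

Lemma dotvBl g h x : dotv (g - h) x = dotv g x - dotv h x.
Proof. by rewrite /dotv -sumrB; apply: eq_bigr => i _; rewrite !mxE mulrBl. Qed.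

Lemma hlin_conv (f : vec -> R) (fp : vec -> vec) a w x y :
  hlin f fp w (a *: x + (1 - a) *: y) = a * hlin f fp w x + (1 - a) * hlin f fp w y.
Proof. by rewrite /hlin !dotvBr dotvDr !dotvZr; ring. Qed.

Lemma descent_step (X : set vec) (f : vec -> R) (fp : vec -> vec) (nrm : vec -> R)
    (M rho a l : R) u z y :
  is_norm nrm -> is_convex_set X ->
  (forall x y, X x -> X y -> f x + dotv (fp x) (y - x) <= f y) ->
  (forall x y, X x -> X y ->
     f y - f x - dotv (fp x) (y - x) <= M / (1 + rho) * nrm (y - x) `^ (1 + rho)) ->
  0 < a <= 1 -> X u -> X z -> X y ->
  hlin f fp ((1 - a) *: u + a *: z) y <= l ->
  f (a *: y + (1 - a) *: u) - l <=
    (1 - a) * (f u - l) + M / (1 + rho) * (a `^ (1 + rho) * nrm (y - z) `^ (1 + rho)).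
Proof.
move=> [nrm0 _ nrmZ _] cX sub smo /andP[a0 a1] Xu Xz Xy hy.
have a01 : 0 <= a <= 1 by rewrite (ltW a0).
set w := (1 - a) *: u + a *: z; set v := a *: y + (1 - a) *: u.
have Xw : X w by rewrite /w addrC; apply: cX.
have Xv : X v by apply: cX.
have vw : v - w = a *: (y - z) by rewrite /v /w scalerBr opprD addrA addrK.
have hv : f v <= hlin f fp w v + M / (1 + rho) * (a `^ (1 + rho) * nrm (y - z) `^ (1 + rho)).
  have := smo _ _ Xw Xv; rewrite [X in nrm X]vw nrmZ ger0_norm ?(ltW a0) // powRM ?(ltW a0) //.
  by rewrite /hlin; lra.
rewrite /v hlin_conv in hv.
have hu : hlin f fp w u <= f u by exact: sub.
have : a * hlin f fp w y + (1 - a) * hlin f fp w u <= a * l + (1 - a) * f u.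
  by apply: lerD; apply: ler_wpM2l; rewrite ?subr_ge0 ?(ltW a0).
lra.
Qed.

Lemma bregman_step (X : set vec) (omega : vec -> R) (gw : vec -> vec) (nrm : vec -> R)
    (sigma : R) x0 u v :
  (forall x y, X x -> X y ->
     omega x + dotv (gw x) (y - x) + sigma / 2 * nrm (y - x) ^+ 2 <= omega y) ->
  X u -> X v -> 0 <= dotv (gw u - gw x0) (v - u) ->
  d_omega omega gw x0 u + sigma / 2 * nrm (v - u) ^+ 2 <= d_omega omega gw x0 v.
Proof.
move=> sc Xu Xv; have := sc _ _ Xu Xv.
by rewrite /d_omega dotvBl !dotvBr; lra.
Qed.

End Linearization.

Lemma lt_K_APL (R : realType) (c M Omega beta theta rho D : R) (k : nat) :
  0 <= rho -> 0 < beta -> 0 < theta -> 0 < D -> (0 < k)%N ->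
  theta * (beta * D) <
    M / (1 + rho) * Omega `^ ((1 + rho) / 2) * (c * k%:R `^ (- ((1 + 3 * rho) / 2))) ->
  (Posz k < K_APL c M Omega beta theta rho D)%R.
Proof.
move=> rho0 beta0 theta0 D0 k0.
have rho1 : 0 < 1 + rho by rewrite ltr_wpDr.
set e := (1 + 3 * rho) / 2; set W := Omega `^ _.
have e0 : 0 < e by rewrite divr_gt0 // ltr_wpDr ?mulr_ge0.
have ke0 : 0 < k%:R `^ e by rewrite powR_gt0 ?ltr0n.
rewrite powRN -(ltr_pM2r (mulr_gt0 ke0 rho1)).
have -> : theta * (beta * D) * (k%:R `^ e * (1 + rho)) =
    k%:R `^ e * (beta * theta * (1 + rho) * D) by ring.
have -> : M / (1 + rho) * W * (c * (k%:R `^ e)^-1) * (k%:R `^ e * (1 + rho)) =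
    c * M * W by field; rewrite !gt_eqF.
rewrite -ltr_pdivlMr ?mulr_gt0 // => keQ.
rewrite /K_APL ceil_gt_int -pmulrn -[2 / _]invf_div -/e.
have kE : k%:R = (k%:R `^ e) `^ e^-1 :> R.
  by rewrite -powRrM mulfV ?lt0r_neq0 // powRr1.
rewrite {1}kE.
by rewrite gt0_ltr_powR ?invr_gt0 ?nnegrE ?powR_ge0 // (le_trans (ltW ke0) (ltW keQ)).
Qed.

Section APLRun.
Variables (R : realType) (n : nat).
Notation vec := 'rV[R]_n.
Variables (nrm : vec -> R) (X : set vec) (f : vec -> R) (fp : vec -> vec).
Variables (M rho : R) (omega : vec -> R) (gw : vec -> vec) (sigma : R).
Variables (alpha : nat -> R) (p : vec) (lb beta theta l : R).
Variables (xl x xu : nat -> vec) (fup flow : nat -> R) (Xp : nat -> set vec) (k : nat).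
Hypothesis run : APL_run X f fp omega gw alpha p lb beta theta l xl x xu fup flow Xp k.

Local Notation dw := (d_omega omega gw (x 0%N)).
Local Notation N i := (nrm (x i - x i.-1)).

Lemma run_localizer_subset j : (j < k)%N -> Xp j `<=` X.
Proof.
case: run => -[_ _ _ _ [_ [_ _ _ X0X]]] _ step4.
case: j => [//|j] jk; have [_ _ _ _ XjX] := step4 j.+1 jk.
by move=> y /XjX [].
Qed.

Lemma run_x_in j : (j <= k)%N -> X (x j).
Proof.
case: run => -[_ _ _ _ [Xx0 _]] step _; case: j => [//|j] jk.
have [_ _ [_ [[Xpx _] _]] _ _] := step j.+1 jk.
exact: run_localizer_subset Xpx.
Qed.

Lemma run_fxu j : (1 <= j <= k)%N -> f (xu j) = fup j.
Proof. by case: run => _ step _ /step [_ _ _ _ []]. Qed.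

Lemma run_level_gap : fup 0%N - l = beta * (fup 0%N - flow 0%N).
Proof. by case: run => -[_ _ _ -> _] _ _; ring. Qed.

Hypothesis p_in_X : X p.

Lemma run_xu_in j : (j <= k)%N -> X (xu j).
Proof.
case: run => -[xu0 _ _ _ _] step _; case: j => [_|j jk]; first by rewrite xu0.
by have [_ _ _ _ []] := step j.+1 jk.
Qed.

Hypothesis nrmN : is_norm nrm.
Hypothesis convX : is_convex_set X.
Hypothesis fp_subgrad : forall x y, X x -> X y -> f x + dotv (fp x) (y - x) <= f y.
Hypothesis f_smooth : forall x y, X x -> X y ->
  f y - f x - dotv (fp x) (y - x) <= M / (1 + rho) * nrm (y - x) `^ (1 + rho).
Hypothesis alpha01 : forall j, (1 <= j)%N -> 0 < alpha j <= 1.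

Lemma run_descent j : (1 <= j <= k)%N ->
  f (xu j) - l <= (1 - alpha j) * (f (xu j.-1) - l)
                  + M / (1 + rho) * (alpha j `^ (1 + rho) * N j `^ (1 + rho)).
Proof.
move=> /[dup] /andP[j1 jk] jin; case: run => _ step _.
have [xlj _ [_ [[_ hj] _]] fupj [_ fxuj]] := step j jin.
have jk' : (j.-1 <= k)%N by rewrite (leq_trans (leq_pred j)).
rewrite xlj in hj.
apply: le_trans (descent_step nrmN convX fp_subgrad f_smooth (alpha01 j1)
  (run_xu_in jk') (run_x_in jk') (run_x_in jk) hj).
by rewrite lerD2r fxuj fupj ge_min lexx orbT.
Qed.

Hypothesis omega_strong : forall x y, X x -> X y ->
  omega x + dotv (gw x) (y - x) + sigma / 2 * nrm (y - x) ^+ 2 <= omega y.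

Lemma run_bregman j : (j < k)%N ->
  dw (x j) + sigma / 2 * N j.+1 ^+ 2 <= dw (x j.+1).
Proof.
move=> jk; case: run => _ step step4.
have [_ _ [_ [[Xpx _] _]] _ _] := step j.+1 jk.
apply: bregman_step omega_strong (run_x_in (ltnW jk)) (run_x_in jk) _.
case: j jk Xpx => [|j] jk Xpx; first by rewrite dotvBl subrr.
by have [_ _ _ _ /(_ _ Xpx) []] := step4 j.+1 jk.
Qed.

Lemma run_sum_sq : sigma / 2 * \sum_(1 <= i < k.+1) N i ^+ 2 <= dw (x k).
Proof.
have dw0 : dw (x 0%N) = 0 by rewrite /d_omega dotvBr subrr addr0 subrr.
have := telescope_le (d := fun j => dw (x j)) (s := fun i => sigma / 2 * N i ^+ 2) run_bregman.
by rewrite dw0 add0r -mulr_sumr.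
Qed.

Hypothesis rho01 : 0 <= rho <= 1.
Hypothesis M_gt0 : 0 < M.
Hypothesis sigma_gt0 : 0 < sigma.

Lemma run_gap_bound : (1 <= k)%N ->
  (forall i, (1 <= i <= k)%N -> gamma1 alpha i != 0) ->
  f (xu k) - l <=
    (1 - alpha 1%N) * gamma1 alpha k * (f (xu 0%N) - l)
    + M / (1 + rho) * (2 * dw (x k) / sigma) `^ ((1 + rho) / 2)
      * gamma1 alpha k * lq_norm rho (Gamma1 alpha rho) k.
Proof.
move=> k1 gamma_neq0.
have alpha_le1 j : (1 <= j)%N -> alpha j <= 1 by move/alpha01/andP => [].
have alpha_le1k j : (1 <= j <= k)%N -> alpha j <= 1 by case/andP => /alpha_le1.
have m0 : 0 <= M / (1 + rho).
  by case/andP: rho01 => rho0 _; rewrite divr_ge0 ?addr_ge0 ?(ltW M_gt0).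
have N0 i : 0 <= N i by case: nrmN.
have Gamma_ge0 i : 0 <= Gamma1 alpha rho i.
  rewrite mulr_ge0 ?powR_ge0 // invr_ge0 gamma1_ge0 // => j /andP[j1 _].
  exact: alpha_le1.
have sumN : \sum_(1 <= i < k.+1) N i ^+ 2 <= 2 * dw (x k) / sigma.
  by rewrite ler_pdivlMr //; have := run_sum_sq; lra.
have := lq_norm_hoelder rho01 Gamma_ge0 N0 sumN.
set S := \sum_(1 <= i < k.+1) _; set P := _ `^ _; set L := lq_norm _ _ _ => SLP.
apply: le_trans (gamma1_unroll (e := fun j => f (xu j) - l)
  (c := fun j => N j `^ (1 + rho)) alpha_le1k gamma_neq0 run_descent k1) _.
rewrite -/S [X in _ <= X](_ : _ = gamma1 alpha k *
  ((1 - alpha 1%N) * (f (xu 0%N) - l) + M / (1 + rho) * (L * P))); last by ring.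
apply: ler_wpM2l; first by apply: gamma1_ge0 => j /andP[/alpha_le1].
by rewrite lerD2l ler_wpM2l.
Qed.

Lemma run_Delta0_gt0 : (1 <= k)%N -> beta < 1 -> theta < 1 -> 0 < fup 0%N - flow 0%N.
Proof.
move=> k1 beta_lt1 theta_lt1; case: run => -[_ _ _ l_def _] step _.
have [_ flow1 [flow1_lt _] _ _] := step 1%N k1.
have : flow 0%N <= flow 1%N by rewrite flow1 le_max lexx.
have gap : l - flow 0%N = (1 - beta) * (fup 0%N - flow 0%N) by rewrite l_def; ring.
move=> flow01; have : 0 < (1 - theta) * ((1 - beta) * (fup 0%N - flow 0%N)).
  by rewrite -gap; lra.
by rewrite !pmulr_rgt0 // subr_gt0.
Qed.

Lemma run_prox_bounds D2 :
  (forall x z, X x -> X z -> omega x - omega z - dotv (gw z) (x - z) <= D2) ->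
  0 <= 2 * dw (x k) / sigma <= Omega_wX D2 sigma.
Proof.
move=> D2_max.
have dw_ge0 : 0 <= dw (x k).
  apply: le_trans run_sum_sq; rewrite mulr_ge0 ?divr_ge0 ?(ltW sigma_gt0) //.
  by apply: sumr_ge0 => i _; exact: sqr_ge0.
have dw_le : dw (x k) <= D2.
  by rewrite /d_omega opprD addrA; apply: D2_max; exact: run_x_in.
rewrite /Omega_wX divr_ge0 ?mulr_ge0 ?(ltW sigma_gt0) //=.
by rewrite ler_pM2r ?invr_gt0 // ler_pM2l.
Qed.

Lemma run_lt_K_APL D2 c :
  (forall x z, X x -> X z -> omega x - omega z - dotv (gw z) (x - z) <= D2) ->
  0 < beta < 1 -> 0 < theta < 1 -> alpha 1%N = 1 -> 0 < c ->
  (forall i, (1 <= i <= k)%N -> gamma1 alpha i != 0) ->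
  gamma1 alpha k * lq_norm rho (Gamma1 alpha rho) k <= c * k%:R `^ (- ((1 + 3 * rho) / 2)) ->
  (1 <= k)%N -> l + theta * (fup 0%N - l) < fup k ->
  (Posz k < K_APL c M (Omega_wX D2 sigma) beta theta rho (fup 0%N - flow 0%N))%R.
Proof.
move=> D2_max /andP[beta0 beta1] /andP[theta0 theta1] alpha1 c0 gamma_neq0 gamma_Gamma_le
  k1 fup_k.
have /andP[prox0 prox_le] := run_prox_bounds D2_max.
have := run_gap_bound k1 gamma_neq0.
have kk : (1 <= k <= k)%N by rewrite k1 leqnn.
rewrite alpha1 subrr !mul0r add0r (run_fxu kk) => gap.
have /andP[rho0 _] := rho01.
apply: (lt_K_APL rho0 beta0 theta0 (run_Delta0_gt0 k1 beta1 theta1) k1).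
rewrite -run_level_gap.
set m := M / (1 + rho) in gap *; set W := Omega_wX D2 sigma `^ _; set ck := c * _.
set P := _ `^ ((1 + rho) / 2) in gap.
have m0 : 0 <= m by rewrite divr_ge0 ?addr_ge0 ?(ltW M_gt0).
have gap_le : m * P * gamma1 alpha k * lq_norm rho (Gamma1 alpha rho) k <= m * W * ck.
  rewrite -[m * P * _ * _]mulrA.
  apply: le_trans (ler_wpM2l (mulr_ge0 m0 (powR_ge0 _ _)) gamma_Gamma_le) _.
  rewrite ler_wpM2r ?mulr_ge0 ?powR_ge0 ?(ltW c0) // ler_wpM2l //.
  rewrite /W ge0_ler_powR // ?nnegrE //; first by rewrite divr_ge0 ?addr_ge0.
  exact: le_trans prox0 prox_le.
lra.
Qed.

End APLRun.

Theorem theorem3p3 (R : realType) (n : nat)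
  (nrm : 'rV[R]_n -> R) (X : set 'rV[R]_n)
  (f : 'rV[R]_n -> R) (fp : 'rV[R]_n -> 'rV[R]_n) (M rho : R)
  (omega : 'rV[R]_n -> R) (gw : 'rV[R]_n -> 'rV[R]_n) (sigma D2 : R)
  (alpha : nat -> R) (p : 'rV[R]_n) (lb beta theta : R) :
  is_norm nrm ->
  X !=set0 -> is_convex_set X -> compact X ->
  convex_fun_on X f ->
  (forall x y, X x -> X y -> f x + dotv (fp x) (y - x) <= f y) ->
  0 < M -> 0 <= rho <= 1 ->
  (forall x y, X x -> X y ->
     f y - f x - dotv (fp x) (y - x) <= M / (1 + rho) * nrm (y - x) `^ (1 + rho)) ->
  (forall x, X x -> differentiable omega x /\
     forall v, 'd omega x v = dotv (gw x) v) ->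
  0 < sigma ->
  (forall x y, X x -> X y ->
     omega x + dotv (gw x) (y - x) + sigma / 2 * nrm (y - x) ^+ 2 <= omega y) ->
  (* D2 = D^2_{omega,X} = max_{x,z in X} {omega x - omega z - <grad omega z, x - z>} *)
  (exists x z, [/\ X x, X z & D2 = omega x - omega z - dotv (gw z) (x - z)]) ->
  (forall x z, X x -> X z -> omega x - omega z - dotv (gw z) (x - z) <= D2) ->
  (forall k, (1 <= k)%N -> 0 < alpha k <= 1) ->
  X p -> 0 < beta < 1 -> 0 < theta < 1 ->
  (forall l xl x xu fup flow Xp k, (1 <= k)%N ->
     APL_run X f fp omega gw alpha p lb beta theta l xl x xu fup flow Xp k ->
     (forall i, (1 <= i <= k)%N -> gamma1 alpha i != 0) ->
     f (xu k) - l <=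
       (1 - alpha 1%N) * gamma1 alpha k * (f (xu 0%N) - l)
       + M / (1 + rho) * (2 * d_omega omega gw (x 0%N) (x k) / sigma) `^ ((1 + rho) / 2)
         * gamma1 alpha k * lq_norm rho (Gamma1 alpha rho) k)
  /\
  (* second claim: every iteration k that is completed without termination
     satisfies k < K_APL(Delta0), i.e. at most K_APL(Delta0) iterations are performed *)
  (alpha 1%N = 1 -> forall c, 0 < c ->
     (forall i, (1 <= i)%N -> gamma1 alpha i != 0) ->
     (forall k, (1 <= k)%N ->
        gamma1 alpha k * lq_norm rho (Gamma1 alpha rho) k
          <= c * k%:R `^ (- ((1 + 3 * rho) / 2))) ->
     forall l xl x xu fup flow Xp k, (1 <= k)%N ->
       APL_run X f fp omega gw alpha p lb beta theta l xl x xu fup flow Xp k ->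
       l + theta * (fup 0%N - l) < fup k ->
       (Posz k < K_APL c M (Omega_wX D2 sigma) beta theta rho (fup 0%N - flow 0%N))%R).
Proof.
move=> nrmN _ convX _ _ fp_subgrad M_gt0 rho01 f_smooth _ sigma_gt0 omega_strong _ D2_max
  alpha01 p_in_X beta01 theta01.
split=> [l xl x xu fup flow Xp k k1 run|alpha1 c c0 gamma_neq0 gamma_Gamma_le].
  exact: (run_gap_bound run p_in_X nrmN convX fp_subgrad f_smooth alpha01
    omega_strong rho01 M_gt0 sigma_gt0 k1).
move=> l xl x xu fup flow Xp k k1 run.
apply: (run_lt_K_APL run p_in_X nrmN convX fp_subgrad f_smooth alpha01 omega_strong
  rho01 M_gt0 sigma_gt0 D2_max beta01 theta01 alpha1 c0 _ (gamma_Gamma_le k k1) k1).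
by move=> i /andP[i1 _]; exact: gamma_neq0.
Qed.
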